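(* Let $(A,* )$ be an involutive associative algebra, $(M,* )$ an involutive $A$-bimodule, and $T:M\to A$ a relative Rota-Baxter operator on $A$ with respect to $M$. Let $T_t=\sum_{i\ge0}t^iT_i$ (with $T_0=T$) be a formal one-parameter deformation of $T$. Then $T_1\in i\mathrm{Hom}(M,A)$ is a $1$-cocycle in the complex $(i\mathrm{Hom}(M^{\otimes\bullet},A),d_T)$, and its cohomology class in $iH^1_T(M,A)$ depends only on the equivalence class of the deformation $T_t$.
   Context: An involutive associative algebra is an associative algebra $A$ with a linear map $*:A\to A$ satisfying $a^{**}=a$ and $(ab)^*=b^*a^*$; an involutive $A$-bimodule is an $A$-bimodule $M$ with $*:M\to M$, $u^{**}=u$, $(au)^*=u^*a^*$, $(ua)^*=a^*u^*$. A relative Rota-Baxter operator is a linear $T:M\to A$ with $T(u^* )=T(u)^*$ and $T(u)T(v)=T(uT(v)+T(u)v)$ for $u,v\in M$. Notation: $u\circledast v=uT(v)+T(u)v$, $l_T(u,a)=T(u)a-T(ua)$, $r_T(a,u)=aT(u)-T(au)$. Let $i\mathrm{Hom}(M^{\otimes0},A)=\{a\in A\mid a^*=-a\}$ and for $n\ge1$ $i\mathrm{Hom}(M^{\otimes n},A)=\{f\mid f(u_1,\ldots,u_n)^*=(-1)^{\frac{(n-1)(n-2)}{2}}f(u_n^*,\ldots,u_1^* )\}$. The differential: $d_T(a)(u)=l_T(u,a)-r_T(a,u)$, and for $n\ge1$, $(d_Tf)(u_1,\ldots,u_{n+1})=(-1)^n\big[l_T(u_1,f(u_2,\ldots,u_{n+1}))+\sum_{i=1}^n(-1)^if(u_1,\ldots,u_i\circledast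 u_{i+1},\ldots,u_{n+1})+(-1)^{n+1}r_T(f(u_1,\ldots,u_n),u_{n+1})\big]$; $iH^\bullet_T(M,A)$ is the cohomology of $(i\mathrm{Hom}(M^{\otimes\bullet},A),d_T)$. A formal deformation of $T$ is $T_t=\sum_{i\ge0}t^iT_i$, $T_i\in\mathrm{Hom}(M,A)$, $T_0=T$, such that the $\mathbb{K}[[t]]$-linear extension $T_t:M[[t]]\to A[[t]]$ is a relative Rota-Baxter operator on the involutive algebra $A[[t]]$ w.r.t. the involutive bimodule $M[[t]]$ (structures extended $\mathbb{K}[[t]]$-linearly); equivalently $T_k(u^* )=T_k(u)^*$ and $\sum_{i+j=k}T_i(u)T_j(v)=\sum_{i+j=k}T_i(uT_j(v)+T_j(u)v)$ for all $k\ge0$. Two deformations $T_t,T'_t$ are equivalent if there exist $\mathbf a\in A$ with $\mathbf a^*=-\mathbf a$ and linear maps $\phi_j:A\to A$, $\psi_j:M\to M$ ($j\ge2$) commuting with the involutions such that $\phi_t=\mathrm{id}_A+t(\mathrm{ad}^l_{\mathbf a}-\mathrm{ad}^r_{\mathbf a})+\sum_{j\ge2}t^j\phi_j$ and $\psi_t=\mathrm{id}_M+t(l_{\mathbf a}-r_{\mathbf a})+\sum_{j\ge2}t^j\psi_j$ (where $\mathrm{ad}^l_{\mathbf a}(b)=\mathbf ab$, $\mathrm{ad}^r_{\mathbf a}(b)=b\mathbf a$, $l_{\mathbf a}(u)=\mathbf au$, $r_{\mathbf a}(u)=u\mathbf a$) satisfy $\phi_t(ab)=\phi_t(a)\phi_t(b)$,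 $T'_t\circ\psi_t=\phi_t\circ T_t$, $\psi_t(au)=\phi_t(a)\psi_t(u)$, $\psi_t(ua)=\psi_t(u)\phi_t(a)$ for all $a,b\in A$, $u\in M$. *)

From HB Require Import structures.
From mathcomp Require Import all_boot all_order all_algebra.
Set Implicit Arguments. Unset Strict Implicit. Unset Printing Implicit Defensive.
Import GRing.Theory.
Local Open Scope ring_scope.

Section Defs.
Variable K : fieldType.

Definition is_linear (U V : lmodType K) (f : U -> V) : Prop :=
  forall (k : K) (x y : U), f (k *: x + y) = k *: f x + f y.

Variables (A M : lmodType K).

Record inv_assoc_algebra (mul : A -> A -> A) (starA : A -> A) : Prop := {
  mul_linl : forall b, is_linear (fun a => mul a b);
  mul_linr : forall a, is_linear (mul a);
  mul_assoc : forall a b c, mul (mul a b) c = mul a (mul b c);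
  starA_lin : is_linear starA;
  starA_inv : forall a, starA (starA a) = a;
  starA_mul : forall a b, starA (mul a b) = mul (starA b) (starA a)
}.

Record inv_bimodule (mul : A -> A -> A) (starA : A -> A)
    (lact : A -> M -> M) (ract : M -> A -> M) (starM : M -> M) : Prop := {
  lact_linl : forall u, is_linear (fun a => lact a u);
  lact_linr : forall a, is_linear (lact a);
  ract_linl : forall a, is_linear (fun u => ract u a);
  ract_linr : forall u, is_linear (ract u);
  lact_mul : forall a b u, lact (mul a b) u = lact a (lact b u);
  ract_mul : forall u a b, ract u (mul a b) = ract (ract u a) b;
  lact_ract : forall a u b, ract (lact a u) b = lact a (ract u b);
  starM_lin : is_linear starM;
  starM_inv : forall u, starM (starM u) = u;
  starM_lact : forall a u, starM (lact a u) = ract (starM u) (starA a);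
  starM_ract : forall u a, starM (ract u a) = lact (starA a) (starM u)
}.

Variables (mul : A -> A -> A) (starA : A -> A)
  (lact : A -> M -> M) (ract : M -> A -> M) (starM : M -> M).

Definition rel_RB (T : M -> A) : Prop :=
  is_linear T /\
  (forall u, T (starM u) = starA (T u)) /\
  (forall u v, mul (T u) (T v) = T (ract u (T v) + lact (T u) v)).

Section Complex.
Variable T : M -> A.

Definition circT (u v : M) : M := ract u (T v) + lact (T u) v.
Definition lT (u : M) (a : A) : A := mul (T u) a - T (ract u a).
Definition rT (a : A) (u : M) : A := mul a (T u) - T (lact a u).

(* n-cochains: functions f : seq M -> A, where f is evaluated on lists of
   length n (the arguments u_1, ..., u_n in order); a 0-cochain is the
   element f [::] of A. *)
Definition iHom (n : nat) (f : seq M -> A) : Prop :=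
  match n with
  | 0 => starA (f [::]) = - f [::]
  | n'.+1 => forall us, size us = n ->
      starA (f us) = (-1 : K) ^+ ((n' * n'.-1) %/ 2) *: f (rev (map starM us))
  end.
(* the differential d_T; (dT n f) is an (n+1)-cochain, meaningful on lists
   of length n+1 *)
Definition dT (n : nat) (f : seq M -> A) : seq M -> A :=
  match n with
  | 0 => fun us => lT (nth 0 us 0) (f [::]) - rT (f [::]) (nth 0 us 0)
  | n'.+1 => fun us =>
      (-1 : K) ^+ n *:
        ( lT (nth 0 us 0) (f (behead us))
        + \sum_(i < n) (-1 : K) ^+ i.+1 *:
              f (take i us ++ circT (nth 0 us i) (nth 0 us i.+1) :: drop i.+2 us)
        + (-1 : K) ^+ n.+1 *: rT (f (take n us)) (nth 0 us n) )
  end.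

Definition cochain1 (S : M -> A) : seq M -> A := fun us => S (nth 0 us 0).

Definition is_cocycle (n : nat) (f : seq M -> A) : Prop :=
  iHom n f /\ forall us, size us = n.+1 -> dT n f us = 0.

Definition same_class (n : nat) (f g : seq M -> A) : Prop :=
  exists h : (seq M -> A), iHom (n.-1)%N h /\
    forall us, size us = n -> f us - g us = dT (n.-1)%N h us.
End Complex.

(* formal deformation T_t = sum_i t^i (Ts i) of T; the K[[t]]-linear
   extension is a relative Rota-Baxter operator iff each Ts i is K-linear and
   the coefficientwise identities below hold *)
Definition formal_deformation (T : M -> A) (Ts : nat -> M -> A) : Prop :=
  (forall u, Ts 0%N u = T u) /\
  (forall i, is_linear (Ts i)) /\
  (forall k u, Ts k (starM u) = starA (Ts k u)) /\
  (forall k u v,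
     \sum_(i < k.+1) mul (Ts i u) (Ts (k - i)%N v)
     = \sum_(i < k.+1) Ts i (ract u (Ts (k - i)%N v) + lact (Ts (k - i)%N u) v)).

(* equivalence of deformations Ts and Ts' : phi_t = sum_j t^j phi j,
   psi_t = sum_j t^j psi j; the identities are stated coefficientwise in t *)
Definition equiv_deformations (Ts Ts' : nat -> M -> A) : Prop :=
  exists (a : A) (phi : nat -> A -> A) (psi : nat -> M -> M),
    starA a = - a /\
    (forall b, phi 0%N b = b) /\
    (forall b, phi 1%N b = mul a b - mul b a) /\
    (forall u, psi 0%N u = u) /\
    (forall u, psi 1%N u = lact a u - ract u a) /\
    (forall j, (2 <= j)%N ->
        is_linear (phi j) /\ is_linear (psi j) /\
        (forall b, phi j (starA b) = starA (phi j b)) /\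
        (forall u, psi j (starM u) = starM (psi j u))) /\
    (forall n b c,
        phi n (mul b c) = \sum_(i < n.+1) mul (phi i b) (phi (n - i)%N c)) /\
    (forall n u,
        \sum_(i < n.+1) Ts' i (psi (n - i)%N u)
        = \sum_(i < n.+1) phi i (Ts (n - i)%N u)) /\
    (forall n b u,
        psi n (lact b u) = \sum_(i < n.+1) lact (phi i b) (psi (n - i)%N u)) /\
    (forall n u b,
        psi n (ract u b) = \sum_(i < n.+1) ract (psi i u) (phi (n - i)%N b)).

End Defs.

From mathcomp Require Import all_boot all_order all_algebra.
Set Implicit Arguments.
Unset Strict Implicit.
Import GRing.Theory.
Local Open Scope ring_scope.

(* The coefficient of t in the Rota-Baxter identity for T_t is the linearised
   identity  T(u) T_1(v) + T_1(u) T(v) = T(u T_1(v) + T_1(u) v) + T_1(u ⊛ v),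
   which says exactly that d_T T_1 = 0; T_1 commutes with the involutions as
   every T_k does.  For an equivalence (a, phi_t, psi_t), the coefficient of t
   in T'_t ∘ psi_t = phi_t ∘ T_t, where psi_1 = l_a - r_a and
   phi_1 = ad^l_a - ad^r_a, gives T'_1 - T_1 = d_T(-a), and -a is
   skew-symmetric because a is. *)

Section LinearMaps.
Variables (K : fieldType) (U V : lmodType K) (f : U -> V).
Hypothesis f_lin : is_linear f.

Lemma is_linear0 : f 0 = 0.
Proof.
have E := f_lin 1 0 0.
rewrite addr0 !scale1r in E.
by apply: (addrI (f 0)); rewrite addr0 -E.
Qed.

Lemma is_linearD x y : f (x + y) = f x + f y.
Proof. by rewrite -{1}(scale1r x) f_lin scale1r. Qed.

Lemma is_linearN x : f (- x) = - f x.
Proof. by rewrite -scaleN1r -(addr0 (_ *: x)) f_lin is_linear0 addr0 scaleN1r. Qed.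

Lemma is_linearB x y : f (x - y) = f x - f y.
Proof. by rewrite is_linearD is_linearN. Qed.

End LinearMaps.

Section FirstOrderDeformation.
Variables (K : fieldType) (A M : lmodType K).
Variables (mul : A -> A -> A) (starA : A -> A)
  (lact : A -> M -> M) (ract : M -> A -> M) (starM : M -> M).
Hypothesis HA : inv_assoc_algebra mul starA.
Hypothesis HM : inv_bimodule mul starA lact ract starM.
Variable T : M -> A.
Hypothesis T_lin : is_linear T.

Local Notation circ := (circT lact ract T).

Lemma iHom1_cochain1 (S : M -> A) :
  (forall u, S (starM u) = starA (S u)) -> iHom starA starM 1 (cochain1 S).
Proof. by move=> S_star [|u [|v us]] //= _; rewrite /cochain1 /= expr0 scale1r S_star. Qed.

Lemma dT1_cochain1 (S : M -> A) u v :
  dT mul lact ract T 1 (cochain1 S) [:: u; v]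
  = S (circ u v) - lT mul ract T u (S v) - rT mul lact T (S u) v.
Proof.
rewrite /= big_ord1 /cochain1 /= expr1 sqrrN expr1n scale1r !scaleN1r.
(* [lT] and [rT] are transparent: abstract them so that [opprD] cannot unfold them. *)
move: (lT mul ract T u (S v)) (rT mul lact T (S u) v) (S (circ u v)) => l r s.
by rewrite !opprD opprK [- l + _]addrC.
Qed.

Lemma cochain1_cocycle (S : M -> A) :
  (forall u, S (starM u) = starA (S u)) ->
  (forall u v, mul (T u) (S v) + mul (S u) (T v)
               = T (ract u (S v) + lact (S u) v) + S (circ u v)) ->
  is_cocycle mul starA lact ract starM T 1 (cochain1 S).
Proof.
move=> S_star S_RB; split; first exact: iHom1_cochain1.
case=> [|u [|v [|w us]]] // _; rewrite dT1_cochain1.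
apply/eqP; rewrite subr_eq0 subr_eq addrC /lT /rT addrACA -opprD S_RB.
by rewrite (is_linearD T_lin) addrAC subrr add0r.
Qed.

Lemma cochain1_same_class (S S' : M -> A) (a : A) :
  starA a = - a ->
  (forall u, S' u - S u = mul a (T u) - mul (T u) a - T (lact a u - ract u a)) ->
  same_class mul starA lact ract starM T 1 (cochain1 S') (cochain1 S).
Proof.
move=> a_skew dS; exists (fun _ => - a); split.
  by rewrite /= (is_linearN (starA_lin HA)) a_skew.
case=> [|u [|v us]] //= _; rewrite /cochain1 /= dS /lT /rT.
rewrite (is_linearN (mul_linr HA _)) (is_linearN (mul_linl HA _)).
rewrite (is_linearN (ract_linr HM _)) (is_linearN (lact_linl HM _)).
rewrite !(is_linearN T_lin) (is_linearB T_lin) !opprK opprB opprD opprK.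
by rewrite [RHS]addrACA [- mul _ _ + mul _ _]addrC.
Qed.

Lemma formal_deformation_order1 (Ts : nat -> M -> A) :
  formal_deformation mul starA lact ract starM T Ts ->
  forall u v, mul (T u) (Ts 1%N v) + mul (Ts 1%N u) (T v)
              = T (ract u (Ts 1%N v) + lact (Ts 1%N u) v) + Ts 1%N (circ u v).
Proof.
case=> T0 [_ [_ Ts_RB]] u v; have := Ts_RB 1%N u v.
by rewrite !big_ord_recr !big_ord0 /= !add0r subn0 subnn !T0.
Qed.

Lemma equiv_deformations_order1 (Ts Ts' : nat -> M -> A) :
  formal_deformation mul starA lact ract starM T Ts ->
  formal_deformation mul starA lact ract starM T Ts' ->
  equiv_deformations mul starA lact ract starM Ts Ts' ->
  exists2 a, starA a = - a &
    forall u, Ts' 1%N u - Ts 1%N u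
              = mul a (T u) - mul (T u) a - T (lact a u - ract u a).
Proof.
move=> [T0 _] [T0' _] [a [phi [psi [a_skew [phi0 [phi1 [psi0 [psi1 [_ [_ [Tpsi _]]]]]]]]]]].
exists a => // u; have := Tpsi 1%N u.
rewrite !big_ord_recr !big_ord0 /= !add0r subn0 subnn T0 T0' phi0 phi1 psi0 psi1 => E.
by rewrite -[Ts' _ _](addKr (T (lact a u - ract u a))) E [Ts _ _ + _]addrC addrA addrK addrC.
Qed.

End FirstOrderDeformation.

Theorem mainTheorem6 (K : fieldType) (A M : lmodType K)
  (mul : A -> A -> A) (starA : A -> A)
  (lact : A -> M -> M) (ract : M -> A -> M) (starM : M -> M)
  (HA : inv_assoc_algebra mul starA)
  (HM : inv_bimodule mul starA lact ract starM)
  (T : M -> A) (HT : rel_RB mul starA lact ract starM T)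
  (Ts : nat -> M -> A)
  (HTs : formal_deformation mul starA lact ract starM T Ts) :
  is_cocycle mul starA lact ract starM T 1 (cochain1 (Ts 1%N)) /\
  forall Ts' : nat -> M -> A,
    formal_deformation mul starA lact ract starM T Ts' ->
    equiv_deformations mul starA lact ract starM Ts Ts' ->
    same_class mul starA lact ract starM T 1 (cochain1 (Ts' 1%N)) (cochain1 (Ts 1%N)).
Proof.
have [T_lin _] := HT.
have [_ [_ [Ts_star _]]] := HTs.
split; first exact (cochain1_cocycle T_lin (Ts_star 1%N) (formal_deformation_order1 HTs)).
move=> Ts' HTs' equiv_Ts.
have [a a_skew dTs] := equiv_deformations_order1 HTs HTs' equiv_Ts.
exact (cochain1_same_class HA HM T_lin a_skew dTs).
Qed.
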